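(* Let $K>0$ and let $G$ be a $K$-$\mathrm{CSA}$ group. There exists a quantifier-free first-order formula $\psi_K(x,y)$ in the language of groups (depending only on $K$) such that for every element $g\in G$ of infinite order, $M(g)=\{h\in G \mid G\models\psi_K(h,g)\}$.
   Context: A group $G$ is $K$-$\mathrm{CSA}$ ($K>0$) if: (i) every finite subgroup of $G$ has order at most $K$; (ii) every element $g$ of infinite order is contained in a unique maximal virtually abelian subgroup of $G$, denoted $M(g)$, and $M(g)$ is $K$-virtually torsion-free abelian, i.e. has a torsion-free abelian subgroup of index less than $K$; (iii) $M(g)$ is equal to its own normalizer. *)

From Stdlib Require Import List Arith.
Import ListNotations.

Record group (T : Type) := Group {
  gmul : T -> T -> T;
  ginv : T -> T;
  gone : T;
  gmulA : forall x y z, gmul x (gmul y z) = gmul (gmul x y) z;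
  gmul1l : forall x, gmul gone x = x;
  gmulVl : forall x, gmul (ginv x) x = gone
}.
Arguments gmul {T} g _ _.
Arguments ginv {T} g _.
Arguments gone {T} g.

Section GroupDefs.
Context {T : Type} (G : group T).

Fixpoint gpow (x : T) (n : nat) : T :=
  match n with 0 => gone G | S n => gmul G x (gpow x n) end.

Definition subgroup (H : T -> Prop) : Prop :=
  H (gone G) /\ (forall x y, H x -> H y -> H (gmul G x y)) /\
  (forall x, H x -> H (ginv G x)).

Definition subset (H N : T -> Prop) : Prop := forall x, H x -> N x.
Definition same_set (H N : T -> Prop) : Prop := forall x, H x <-> N x.

Definition card_le (H : T -> Prop) (n : nat) : Prop :=
  exists l : list T, length l <= n /\ forall x, H x -> In x l.

Definition finite_set (H : T -> Prop) : Prop := exists n, card_le H n.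

Definition infinite_order (g : T) : Prop :=
  forall n, 0 < n -> gpow g n <> gone G.

Definition abelian (H : T -> Prop) : Prop :=
  forall x y, H x -> H y -> gmul G x y = gmul G y x.

Definition torsion_free (H : T -> Prop) : Prop :=
  forall x, H x -> x <> gone G -> infinite_order x.

(* A is a subgroup of H whose index in H is at most n: H is covered by at
   most n left cosets a A with a in H. *)
Definition index_le (H A : T -> Prop) (n : nat) : Prop :=
  exists l : list T, length l <= n /\ (forall a, In a l -> H a) /\
    forall h, H h -> exists a, In a l /\ A (gmul G (ginv G a) h).

Definition virtually_abelian (H : T -> Prop) : Prop :=
  subgroup H /\ exists A n, subgroup A /\ subset A H /\ abelian A /\ index_le H A n.

Definition K_virtually_tf_abelian (K : nat) (H : T -> Prop) : Prop :=
  exists A n, subgroup A /\ subset A H /\ abelian A /\ torsion_free A /\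
    n < K /\ index_le H A n.

Definition max_va_containing (g : T) (M : T -> Prop) : Prop :=
  virtually_abelian M /\ M g /\
  forall N, virtually_abelian N -> subset M N -> same_set N M.

Definition self_normalizing (M : T -> Prop) : Prop :=
  forall x, (forall m, M m <-> M (gmul G x (gmul G m (ginv G x)))) -> M x.

Definition K_CSA (K : nat) : Prop :=
  (forall H, subgroup H -> finite_set H -> card_le H K) /\
  (forall g, infinite_order g ->
     (exists M, max_va_containing g M) /\
     (forall M M', max_va_containing g M -> max_va_containing g M' -> same_set M M') /\
     (forall M, max_va_containing g M ->
        K_virtually_tf_abelian K M /\ self_normalizing M)).
End GroupDefs.

(* Quantifier-free first-order formulas in the language of groups
   (signature: *, ^-1, 1; equality) in the two free variables x, y. *)
Inductive gterm : Type :=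
  | TX | TY | TOne | TMul (s t : gterm) | TInv (t : gterm).

Inductive qf_formula : Type :=
  | FTrue | FFalse
  | FEq (s t : gterm)
  | FNot (f : qf_formula)
  | FAnd (f1 f2 : qf_formula)
  | FOr (f1 f2 : qf_formula)
  | FImp (f1 f2 : qf_formula).

Fixpoint eval_term {T} (G : group T) (x y : T) (t : gterm) : T :=
  match t with
  | TX => x | TY => y | TOne => gone G
  | TMul s u => gmul G (eval_term G x y s) (eval_term G x y u)
  | TInv s => ginv G (eval_term G x y s)
  end.

Fixpoint sat {T} (G : group T) (x y : T) (f : qf_formula) : Prop :=
  match f with
  | FTrue => True | FFalse => False
  | FEq s t => eval_term G x y s = eval_term G x y t
  | FNot f => ~ sat G x y f
  | FAnd f1 f2 => sat G x y f1 /\ sat G x y f2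
  | FOr f1 f2 => sat G x y f1 \/ sat G x y f2
  | FImp f1 f2 => sat G x y f1 -> sat G x y f2
  end.

From Stdlib Require Import List Arith Lia Classical.

(** Put [N = K!] and [psi_K(x, y) := (x y^N x^-1) y^N = y^N (x y^N x^-1)].
    If [h] lies in [M(g)], the torsion-free abelian subgroup of index [< K] of
    [M(g)] contains the [N]-th power of every element of [M(g)] (pigeonhole on
    cosets), in particular [h g^N h^-1] and [g^N], which therefore commute.
    Conversely, for [z] of infinite order, [M(z)] is the only maximal virtually
    abelian subgroup containing [z], so any [x] with [x M(z) x^-1] also maximal
    and containing [z] normalizes, hence lies in, [M(z)].  This applies to [x]
    commuting with [y := g^N], so [h y h^-1] lies in [M(y) = M(g)]; and then,
    with [z := h y h^-1], to [h] itself. *)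

Lemma pigeonhole_rel {A : Type} (R : nat -> A -> Prop) n : forall l : list A,
  length l <= n -> (forall i, i <= n -> exists a, In a l /\ R i a) ->
  exists i j a, i < j <= n /\ R i a /\ R j a.
Proof.
  induction n as [|n IHn]; intros l Hl Hcov.
  - destruct l; [|simpl in Hl; lia].
    destruct (Hcov 0 (le_n _)) as [a [[] _]].
  - destruct (Hcov (S n) (le_n _)) as [a0 [Ha0 R0]].
    destruct (classic (exists i, i <= n /\ R i a0)) as [[i [Hi Ri]]|Hfresh].
    { exists i, (S n), a0; repeat split; auto; lia. }
    apply in_split in Ha0 as [l1 [l2 ->]].
    destruct (IHn (l1 ++ l2)) as [i [j [a [Hij [Ri Rj]]]]].
    + rewrite length_app in *; simpl in Hl; lia.
    + intros i Hi. destruct (Hcov i ltac:(lia)) as [a [Ha Ra]].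
      exists a; split; auto.
      apply in_app_or in Ha as [Ha|[<-|Ha]]; apply in_or_app; auto.
      exfalso; eauto.
    + exists i, j, a; repeat split; auto; lia.
Qed.

Lemma divide_fact m k : 0 < m <= k -> Nat.divide m (fact k).
Proof.
  induction k as [|k IHk]; intros Hm; [lia|].
  change (fact (S k)) with (S k * fact k).
  destruct (Nat.eq_dec m (S k)) as [->|Hne].
  - apply Nat.divide_factor_l.
  - apply Nat.divide_mul_r, IHk; lia.
Qed.

Fixpoint tpow (t : gterm) (n : nat) : gterm :=
  match n with 0 => TOne | S n => TMul t (tpow t n) end.

Definition conj_pow_commute_formula (N : nat) : qf_formula :=
  let yN := tpow TY N in
  let c := TMul (TMul TX yN) (TInv TX) in
  FEq (TMul c yN) (TMul yN c).

Declare Scope group_scope.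

Section GroupTheory.
Context {T : Type} (G : group T).

Local Notation "1" := (gone G) : group_scope.
Local Notation "x * y" := (gmul G x y) : group_scope.
Local Notation "x ^-1" := (ginv G x)
  (at level 3, left associativity, format "x ^-1") : group_scope.
Local Notation "x ^+ n" := (gpow G x n) (at level 29, left associativity) : group_scope.
Local Open Scope group_scope.

Lemma mulgV x : x * x^-1 = 1.
Proof.
  rewrite <- (gmul1l _ G (x * x^-1)), <- (gmulVl _ G x^-1) at 1.
  rewrite <- gmulA, (gmulA _ G x^-1 x), gmulVl, gmul1l.
  apply gmulVl.
Qed.

Lemma mulg1 x : x * 1 = x.
Proof. rewrite <- (gmulVl _ G x), gmulA, mulgV, gmul1l. reflexivity. Qed.

Lemma mulgK x y : y * x * x^-1 = y.
Proof. rewrite <- gmulA, mulgV, mulg1. reflexivity. Qed.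

Lemma mulgKV x y : y * x^-1 * x = y.
Proof. rewrite <- gmulA, gmulVl, mulg1. reflexivity. Qed.

Lemma invg_unique x y : x * y = 1 -> x^-1 = y.
Proof.
  intros Hxy. rewrite <- (gmul1l _ G y), <- (gmulVl _ G x), <- gmulA, Hxy.
  symmetry. apply mulg1.
Qed.

Lemma invgK x : x^-1^-1 = x.
Proof. apply invg_unique, gmulVl. Qed.

Lemma invgM x y : (x * y)^-1 = y^-1 * x^-1.
Proof. apply invg_unique. rewrite gmulA, mulgK. apply mulgV. Qed.

Lemma invg1 : 1^-1 = 1.
Proof. apply invg_unique, gmul1l. Qed.

Local Ltac gsimpl := repeat first
  [ rewrite gmulA | rewrite invgM | rewrite invgK | rewrite invg1
  | rewrite gmulVl | rewrite mulgV | rewrite mulgK | rewrite mulgKV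
  | rewrite gmul1l | rewrite mulg1 ].

Definition commute x y : Prop := x * y = y * x.

Lemma gpowD x m n : x ^+ (m + n) = x ^+ m * x ^+ n.
Proof.
  induction m as [|m IHm]; simpl.
  - rewrite gmul1l. reflexivity.
  - rewrite IHm, gmulA. reflexivity.
Qed.

Lemma gpowM x m n : x ^+ (n * m)%nat = x ^+ m ^+ n.
Proof.
  induction n as [|n IHn]; simpl; [reflexivity|].
  rewrite gpowD, IHn. reflexivity.
Qed.

Lemma gpow_conj h y n : (h * y * h^-1) ^+ n = h * y ^+ n * h^-1.
Proof.
  induction n as [|n IHn]; simpl; [gsimpl; reflexivity|].
  rewrite IHn. gsimpl. reflexivity.
Qed.

Lemma groupX H x n : subgroup G H -> H x -> H (x ^+ n).
Proof. intros [H1 [HM _]] Hx. induction n; simpl; auto. Qed.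

Lemma infinite_order_gpow x n :
  infinite_order G x -> 0 < n -> infinite_order G (x ^+ n).
Proof.
  intros Hx Hn k Hk. rewrite <- gpowM.
  apply Hx. pose proof (Nat.mul_pos_pos k n). lia.
Qed.

Lemma infinite_order_conj h y :
  infinite_order G y -> infinite_order G (h * y * h^-1).
Proof.
  intros Hy k Hk Hconj. apply (Hy k Hk).
  rewrite gpow_conj in Hconj.
  replace (y ^+ k) with (h^-1 * (h * y ^+ k * h^-1) * h) by (gsimpl; reflexivity).
  rewrite Hconj. gsimpl. reflexivity.
Qed.

Lemma eval_tpow x y t n : eval_term G x y (tpow t n) = eval_term G x y t ^+ n.
Proof. induction n; simpl; congruence. Qed.

Lemma sat_conj_pow_commute h g N :
  sat G h g (conj_pow_commute_formula N) <-> commute (h * g ^+ N * h^-1) (g ^+ N).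
Proof. simpl. rewrite !eval_tpow. reflexivity. Qed.

(* [conjset x S] is [x S x^-1]. *)

Definition conjset x (S : T -> Prop) : T -> Prop := fun m => S (x^-1 * m * x).

Lemma subgroup_conjset x S : subgroup G S -> subgroup G (conjset x S).
Proof.
  intros [H1 [HM HV]]; unfold conjset; split; [|split].
  - gsimpl. exact H1.
  - intros a b Ha Hb.
    replace (x^-1 * (a * b) * x) with ((x^-1 * a * x) * (x^-1 * b * x))
      by (gsimpl; reflexivity).
    auto.
  - intros a Ha.
    replace (x^-1 * a^-1 * x) with ((x^-1 * a * x)^-1) by (gsimpl; reflexivity).
    auto.
Qed.

Lemma abelian_conjset x A : abelian G A -> abelian G (conjset x A).
Proof.
  unfold conjset; intros HA a b Ha Hb.
  replace (a * b) with (x * ((x^-1 * a * x) * (x^-1 * b * x)) * x^-1)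
    by (gsimpl; reflexivity).
  rewrite (HA _ _ Ha Hb). gsimpl. reflexivity.
Qed.

Lemma index_le_conjset x S A n :
  index_le G S A n -> index_le G (conjset x S) (conjset x A) n.
Proof.
  intros [l [Hl [HlS Hcov]]].
  exists (map (fun a => x * a * x^-1) l).
  split; [rewrite length_map; exact Hl|]. split.
  - intros b Hb. apply in_map_iff in Hb as [a [<- Ha]].
    unfold conjset. gsimpl. auto.
  - intros h Hh. destruct (Hcov _ Hh) as [a [Ha HAa]].
    exists (x * a * x^-1). split; [apply in_map_iff; eauto|].
    unfold conjset. revert HAa. gsimpl. auto.
Qed.

Lemma virtually_abelian_conjset x S :
  virtually_abelian G S -> virtually_abelian G (conjset x S).
Proof.
  intros [HS [A [n [HA [HAS [HAab HAidx]]]]]].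
  split; [apply subgroup_conjset; exact HS|].
  exists (conjset x A), n.
  split; [apply subgroup_conjset; exact HA|].
  split; [intros m; apply HAS|].
  split; [apply abelian_conjset; exact HAab|].
  apply index_le_conjset; exact HAidx.
Qed.

Lemma max_va_containing_conjset x z M :
  max_va_containing G z M -> max_va_containing G (x * z * x^-1) (conjset x M).
Proof.
  intros [Hva [Hz Hmax]]. split; [apply virtually_abelian_conjset; exact Hva|].
  split; [unfold conjset; gsimpl; exact Hz|].
  intros N HN HMN.
  assert (HNM : same_set (conjset x^-1 N) M).
  { apply Hmax; [apply virtually_abelian_conjset; exact HN|].
    intros m Hm. unfold conjset. apply HMN. unfold conjset. gsimpl. exact Hm. }
  intros m. specialize (HNM (x^-1 * m * x)). unfold conjset in *.
  revert HNM. gsimpl. auto.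
Qed.

Lemma max_va_containing_of_mem g z M :
  max_va_containing G g M -> M z -> max_va_containing G z M.
Proof. intros [Hva [_ Hmax]] Hz. split; auto. Qed.

Lemma self_normalizing_conjset x M :
  self_normalizing G M -> same_set (conjset x M) M -> M x.
Proof.
  intros Hself HxM. apply Hself. intros m.
  specialize (HxM (x * m * x^-1)). unfold conjset in HxM.
  revert HxM. gsimpl. tauto.
Qed.

Lemma index_le_pow_mem M A n u :
  subgroup G M -> subgroup G A -> index_le G M A n -> M u ->
  exists m, 0 < m <= n /\ A (u ^+ m).
Proof.
  intros HM [_ [HAM HAV]] [l [Hl [_ Hcov]]] Hu.
  destruct (pigeonhole_rel (fun i a => A (a^-1 * u ^+ i)) n l Hl)
    as [i [j [a [Hij [Ri Rj]]]]].
  { intros i _. apply Hcov, groupX; assumption. }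
  exists (j - i). split; [lia|].
  replace (u ^+ (j - i)) with ((a^-1 * u ^+ i)^-1 * (a^-1 * u ^+ j)); [auto|].
  replace (u ^+ j) with (u ^+ i * u ^+ (j - i)) by (rewrite <- gpowD; f_equal; lia).
  gsimpl. reflexivity.
Qed.

Lemma pow_fact_mem_index_lt M A n K u :
  subgroup G M -> subgroup G A -> n < K -> index_le G M A n -> M u ->
  A (u ^+ fact K).
Proof.
  intros HM HA HnK HMA Hu.
  destruct (index_le_pow_mem M A n u HM HA HMA Hu) as [m [Hm HAm]].
  destruct (divide_fact m K ltac:(lia)) as [q ->].
  rewrite gpowM. apply groupX; assumption.
Qed.

Lemma K_virtually_tf_abelian_pow_fact_commute K M u v :
  subgroup G M -> K_virtually_tf_abelian G K M -> M u -> M v ->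
  commute (u ^+ fact K) (v ^+ fact K).
Proof.
  intros HM [A [n [HA [_ [HAab [_ [HnK HMA]]]]]]] Hu Hv.
  apply HAab; apply (pow_fact_mem_index_lt M A n); assumption.
Qed.

Section CSA.
Variable K : nat.
Hypothesis csaG : K_CSA G K.

Lemma max_va_conjset_mem z x M :
  infinite_order G z -> max_va_containing G z M ->
  max_va_containing G z (conjset x M) -> M x.
Proof.
  intros Hz HzM HzxM.
  destruct csaG as [_ Hcsa]. destruct (Hcsa z Hz) as [_ [Huniq Hself]].
  apply (self_normalizing_conjset x M); [apply (Hself M HzM)|].
  exact (Huniq _ _ HzxM HzM).
Qed.

Lemma commute_mem_max_va y x M :
  infinite_order G y -> max_va_containing G y M -> commute x y -> M x.
Proof.
  intros Hy HyM Hxy. apply (max_va_conjset_mem y); [exact Hy | exact HyM|].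
  replace y with (x * y * x^-1) at 1 by (rewrite Hxy; gsimpl; reflexivity).
  apply max_va_containing_conjset; exact HyM.
Qed.

Lemma conj_commute_mem_max_va y h M :
  infinite_order G y -> max_va_containing G y M ->
  commute (h * y * h^-1) y -> M h.
Proof.
  intros Hy HyM Hcomm.
  pose proof (commute_mem_max_va y _ M Hy HyM Hcomm) as Hconj.
  apply (max_va_conjset_mem (h * y * h^-1)).
  - apply infinite_order_conj; exact Hy.
  - apply (max_va_containing_of_mem y); assumption.
  - apply max_va_containing_conjset; exact HyM.
Qed.

End CSA.
End GroupTheory.

Theorem proposition2p5 (K : nat) (hK : 0 < K) :
  exists psi : qf_formula,
    forall (T : Type) (G : group T), K_CSA G K ->
      forall g : T, infinite_order G g ->
        forall M : T -> Prop, max_va_containing G g M ->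
          forall h : T, M h <-> sat G h g psi.
Proof.
  exists (conj_pow_commute_formula (fact K)).
  intros T G csaG g Hg M HgM h.
  rewrite sat_conj_pow_commute.
  pose proof HgM as [[HM _] [HMg _]].
  split.
  - intros HMh. rewrite <- gpow_conj.
    destruct csaG as [_ Hcsa]. destruct (Hcsa g Hg) as [_ [_ HMK]].
    apply (K_virtually_tf_abelian_pow_fact_commute G K M); auto.
    + apply (HMK M HgM).
    + destruct HM as [_ [HMM HMV]]. auto.
  - apply (conj_commute_mem_max_va G K csaG).
    + apply infinite_order_gpow; [exact Hg | apply lt_O_fact].
    + apply (max_va_containing_of_mem G g); [exact HgM | apply groupX; assumption].
Qed.
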